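(* Let $f,g\in\mathbb{C}(z)$ be rational functions of the same degree $d>1$, and let $C\subset\mathbb{P}^1\times\mathbb{P}^1$ be a curve which projects dominantly onto both coordinates. If $C$ is preperiodic under the endomorphism $\Phi(x,y)=(f(x),g(y))$ of $\mathbb{P}^1\times\mathbb{P}^1$, then $C$ contains infinitely many points preperiodic under $\Phi$.
   Context: A curve $Y$ is preperiodic under $\Phi$ if $\Phi^m(Y)=\Phi^n(Y)$ for some integers $n>m\ge0$; a point is preperiodic if its forward orbit is finite. *)

From HB Require Import structures.
From mathcomp Require Import all_boot all_order all_algebra.
From mathcomp Require Import complex.
From mathcomp Require Import Rstruct.
From Stdlib Require Import Reals.
Set Implicit Arguments.
Unset Strict Implicit.
Unset Printing Implicit Defensive.
Import Order.TTheory GRing.Theory Num.Theory.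
Local Open Scope ring_scope.

Notation C := (complex Rdefinitions.R).

(* The projective line P^1(C) = C ∪ {∞}; None is the point at infinity. *)
Definition P1 : Type := option C.

Definition hcoords (u : P1) : C * C :=
  if u is Some x then (x, 1) else (1, 0).

Definition homog (n : nat) (p : {poly C}) (x0 x1 : C) : C :=
  \sum_(i < n.+1) p`_i * x0 ^+ i * x1 ^+ (n - i).

(* A rational function f = p/q of degree d is given by coprime polynomials
   p, q with max(deg p, deg q) = d, i.e. maxn (size p) (size q) = d.+1. *)
Definition is_ratfun (p q : {poly C}) (d : nat) : Prop :=
  coprimep p q /\ maxn (size p) (size q) = d.+1.

Definition ratapp (p q : {poly C}) (d : nat) (u : P1) : P1 :=
  let: (x0, x1) := hcoords u in
  let a := homog d p x0 x1 in
  let b := homog d q x0 x1 in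
  if b == 0 then None else Some (a / b).

(* Polynomials F(x,y) in two variables: F : {poly {poly C}}, the outer
   variable is y and the inner one is x, so the coefficient of x^i y^j is
   (F`_j)`_i. *)
Definition degy (F : {poly {poly C}}) : nat := (size F).-1.
Definition ycoef (F : {poly {poly C}}) (j : nat) : {poly C} := F`_j.
Definition degx (F : {poly {poly C}}) : nat :=
  (\max_(j < size F) (size (ycoef F j)).-1)%N.

Definition bihom (F : {poly {poly C}}) (x0 x1 y0 y1 : C) : C :=
  \sum_(j < (degy F).+1) \sum_(i < (degx F).+1)
     (F`_j)`_i * x0 ^+ i * x1 ^+ (degx F - i) * y0 ^+ j * y1 ^+ (degy F - j).

Definition irreducible2 (F : {poly {poly C}}) : Prop :=
  ~ (F \is a GRing.unit) /\ F != 0 /\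
  forall G H : {poly {poly C}}, F = G * H ->
    (G \is a GRing.unit) \/ (H \is a GRing.unit).

(* The (irreducible) curve in P^1 x P^1 which is the closure of {F(x,y)=0},
   i.e. the zero locus of the bihomogenization of F. *)
Definition curve (F : {poly {poly C}}) (z : P1 * P1) : Prop :=
  let: (x0, x1) := hcoords z.1 in
  let: (y0, y1) := hcoords z.2 in
  bihom F x0 x1 y0 y1 = 0.

Definition img {T : Type} (Phi : T -> T) (S : T -> Prop) : T -> Prop :=
  fun w => exists z, S z /\ Phi z = w.
Definition img_iter {T : Type} (Phi : T -> T) (n : nat) (S : T -> Prop)
  : T -> Prop := iter n (img Phi) S.

Definition preperiodic_set {T : Type} (Phi : T -> T) (Y : T -> Prop) : Prop :=
  exists m n : nat, (m < n)%nat /\ img_iter Phi m Y = img_iter Phi n Y.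

Definition preperiodic_pt {T : eqType} (Phi : T -> T) (z : T) : Prop :=
  exists s : seq T, forall n : nat, iter n Phi z \in s.

Definition infinite_set {T : eqType} (S : T -> Prop) : Prop :=
  ~ exists s : seq T, forall z, S z -> z \in s.

Definition split_map (f g : P1 -> P1) (z : P1 * P1) : P1 * P1 :=
  (f z.1, g z.2).

(* A rational map f of degree d >= 2 has infinitely many preperiodic points:
   otherwise f would permute the finite set of them, so each fixed point u
   would be totally ramified (f^-1(u) = {u}), hence a simple fixed point, and
   the d + 1 >= 3 fixed points would give three totally ramified values.  This
   is impossible, as the fibers of f form a pencil, so any three of them are
   linearly dependent, while the d-th powers of three distinct linear forms
   are not.
   Over a preperiodic x the curve C has a point (x, y).  The images Phi^j(C)
   form a finite family, each with finite fibers over the finite orbit of x,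
   so the orbit of (x, y) is finite.  The second coordinate map g plays no
   role. *)

From mathcomp Require Import all_boot all_order all_algebra complex Rstruct.
From mathcomp Require Import ring.
From Stdlib Require Import ClassicalEpsilon Classical.
Set Implicit Arguments.
Unset Strict Implicit.
Unset Printing Implicit Defensive.
Local Open Scope ring_scope.
Import GRing.Theory Num.Theory.

Definition finite_set {T : eqType} (S : T -> Prop) : Prop :=
  exists s : seq T, forall x, S x -> x \in s.

Lemma finite_set_bigcup (I T : eqType) (s : seq I) (P : I -> T -> Prop) :
  (forall i, i \in s -> finite_set (P i)) ->
  finite_set (fun x => exists2 i, i \in s & P i x).
Proof.
elim: s => [|i s IH] fin; first by exists [::] => x [].
have [si Hi] := fin i (mem_head i s).
have [t Ht] := IH (fun j js => fin j (@mem_behead _ (i :: s) j js)).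
exists (si ++ t) => x [j]; rewrite inE mem_cat => /orP [/eqP -> /Hi ->//|js Pjx].
by rewrite Ht ?orbT //; exists j.
Qed.

Lemma finite_set_image (T U : eqType) (g : T -> U) (S : T -> Prop) :
  finite_set S -> finite_set (fun y => exists2 x, S x & g x = y).
Proof. by case=> s Hs; exists (map g s) => _ [x /Hs xs <-]; apply: map_f. Qed.

Lemma finite_set_sub (T : eqType) (S S' : T -> Prop) :
  (forall x, S x -> S' x) -> finite_set S' -> finite_set S.
Proof. by move=> SS' [s Hs]; exists s => x /SS' /Hs. Qed.

Lemma leq_size_coef (R : nzSemiRingType) n (h : {poly R}) :
  (size h <= n.+1)%N -> (size h <= n)%N = (h`_n == 0).
Proof.
move=> hs; case: (ltnP n (size h)) => hn; last by rewrite nth_default ?eqxx.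
have e : size h = n.+1 by apply/eqP; rewrite eqn_leq hs hn.
have -> : h`_n = lead_coef h by rewrite lead_coefE e.
by rewrite lead_coef_eq0 -size_poly_eq0 e.
Qed.

Section XsubCPowers.
Variable R : numFieldType.

Lemma deriv_sum_XsubC_expS (s : seq (R * R)) n :
  (\sum_(ea <- s) ea.1 *: ('X - ea.2%:P) ^+ n.+1)^`() =
  (\sum_(ea <- s) ea.1 *: ('X - ea.2%:P) ^+ n) *+ n.+1.
Proof.
rewrite raddf_sum -sumrMnl; apply: eq_bigr => ea _.
by rewrite /= derivZ deriv_exp derivXsubC mul1r scalerMnr.
Qed.

(* Differentiating [n - m] times kills the constant and keeps the shape. *)
Lemma sum_XsubC_exp_lower (s : seq (R * R)) m n c : (m < n)%N ->
  \sum_(ea <- s) ea.1 *: ('X - ea.2%:P) ^+ n = c%:P ->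
  \sum_(ea <- s) ea.1 *: ('X - ea.2%:P) ^+ m = 0.
Proof.
elim: n c => // n IH c; rewrite ltnS => mn /(congr1 deriv).
rewrite deriv_sum_XsubC_expS derivC -scaler_nat => /eqP.
rewrite scaler_eq0 pnatr_eq0 /= => /eqP sn.
move: mn; rewrite leq_eqVlt => /orP [/eqP -> //|mn].
by apply: (IH 0) => //; rewrite polyC0.
Qed.

Lemma XsubC_exp3_indep n (a1 a2 a3 e1 e2 e3 : R) : (1 < n)%N ->
  a1 != a2 -> a1 != a3 ->
  e1 *: ('X - a1%:P) ^+ n + e2 *: ('X - a2%:P) ^+ n
    + e3 *: ('X - a3%:P) ^+ n = 0 -> e1 = 0.
Proof.
move=> n_gt1 n12 n13 h.
pose s := [:: (e1, a1); (e2, a2); (e3, a3)].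
have sE k : \sum_(ea <- s) ea.1 *: ('X - ea.2%:P) ^+ k =
    e1 *: ('X - a1%:P) ^+ k + e2 *: ('X - a2%:P) ^+ k + e3 *: ('X - a3%:P) ^+ k.
  by rewrite !big_cons big_nil addr0 !addrA.
have lower k : (k <= n)%N -> \sum_(ea <- s) ea.1 *: ('X - ea.2%:P) ^+ k = 0.
  rewrite leq_eqVlt => /orP [/eqP -> | kn]; first by rewrite sE.
  by apply: (sum_XsubC_exp_lower kn (c := 0)); rewrite polyC0 sE.
have := congr1 (horner^~ a2) (lower 1%N (ltnW n_gt1)).
have := congr1 (horner^~ a2) (lower 2%N n_gt1).
rewrite !sE !hornerE /= subrr !mulr0 !addr0 => q2 q1.
(* eliminate [e3] between the relations at levels 2 and 1, evaluated at [a2] *)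
have : e1 * ((a2 - a1) * (a3 - a1)) = e1 * (a2 - a1) * (a2 - a1)
    + e3 * (a2 - a3) * (a2 - a3) - (a2 - a3) * (e1 * (a2 - a1) + e3 * (a2 - a3)).
  by ring.
rewrite q2 q1 mulr0 subrr.
move/eqP; rewrite !mulf_eq0 !subr_eq0 ![_ == a1]eq_sym (negbTE n12) (negbTE n13) !orbF.
by move/eqP.
Qed.

Lemma XsubC_exp2_indep n (a1 a2 e1 e2 c : R) : (1 < n)%N -> a1 != a2 ->
  e1 *: ('X - a1%:P) ^+ n + e2 *: ('X - a2%:P) ^+ n + c%:P = 0 ->
  [/\ e1 = 0, e2 = 0 & c = 0].
Proof.
move=> n_gt1 n12 h.
pose s := [:: (e1, a1); (e2, a2)].
have sE k : \sum_(ea <- s) ea.1 *: ('X - ea.2%:P) ^+ k =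
    e1 *: ('X - a1%:P) ^+ k + e2 *: ('X - a2%:P) ^+ k.
  by rewrite !big_cons big_nil addr0.
have /(sum_XsubC_exp_lower n_gt1) : \sum_(ea <- s) ea.1 *: ('X - ea.2%:P) ^+ n = (- c)%:P.
  by apply/eqP; rewrite sE polyCN -addr_eq0 h.
rewrite sE => h1; have := congr1 (horner^~ a1) h1; have := congr1 (horner^~ a2) h1.
rewrite !hornerE /= !subrr !mulr0 addr0 add0r => /eqP + /eqP.
rewrite !mulf_eq0 !subr_eq0 [a2 == a1]eq_sym (negbTE n12) !orbF => /eqP e10 /eqP e20.
by move: h; rewrite e10 e20 !scale0r !add0r => /eqP; rewrite polyC_eq0 => /eqP.
Qed.

End XsubCPowers.

Lemma XsubC_sqr_dvd_prod (R : idomainType) (r : seq R) : ~~ uniq r ->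
  exists a, ('X - a%:P) ^+ 2 %| \prod_(z <- r) ('X - z%:P).
Proof.
elim: r => //= z r IH; rewrite negb_and negbK big_cons.
case/orP => [zr|/IH [a]]; last by exists a; apply: dvdp_mull.
by exists z; rewrite expr2 dvdp_mul2l ?polyXsubC_eq0 // dvdp_XsubCl root_prod_XsubC.
Qed.

Lemma uniq_map_inj_in (T1 T2 : eqType) (g : T1 -> T2) (s : seq T1) :
  uniq (map g s) -> {in s &, injective g}.
Proof.
elim: s => //= y s IH /andP [gy_s us] x1 x2; rewrite !inE.
case/orP => [/eqP->|x1s]; case/orP => [/eqP->|x2s] // e.
- by move: gy_s; rewrite e map_f.
- by move: gy_s; rewrite -e map_f.
- exact: IH.
Qed.

Lemma finite_set_surj_inj (T : eqType) (f : T -> T) (P : T -> Prop) :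
  finite_set P -> (forall y, P y -> exists2 x, P x & f x = y) ->
  forall x1 x2, P x1 -> P x2 -> f x1 = f x2 -> x1 = x2.
Proof.
case=> s Hs f_onto x1 x2 Px1 Px2 e.
pose t := undup [seq x <- s | excluded_middle_informative (P x)].
have memt x : reflect (P x) (x \in t).
  rewrite mem_undup mem_filter; apply: (iffP andP) => [[/sumboolP]//|Px].
  by split; [apply/sumboolP | apply: Hs].
have t_onto : {subset t <= map f t}.
  by move=> y /memt /f_onto [x /memt xt <-]; apply: map_f.
have := leq_size_uniq (undup_uniq _) t_onto; rewrite size_map leqnn => /(_ isT).
by move/uniq_map_inj_in; apply=> //; apply/memt.
Qed.

Lemma preperiodic_pt_fixed (T : eqType) (f : T -> T) x :
  f x = x -> preperiodic_pt f x.
Proof. by move=> fx; exists [:: x] => n; rewrite inE; apply/eqP; elim: n => //= n ->. Qed.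

Lemma preperiodic_pt_preimage (T : eqType) (f : T -> T) x :
  preperiodic_pt f (f x) -> preperiodic_pt f x.
Proof.
by case=> s Hs; exists (x :: s) => -[|n]; rewrite inE ?eqxx // iterSr Hs orbT.
Qed.

Lemma homog_horner n (h : {poly C}) a :
  (size h <= n.+1)%N -> homog n h a 1 = h.[a].
Proof.
move=> hs; rewrite /homog (horner_coef_wide _ hs).
by apply: eq_bigr => i _; rewrite expr1n mulr1.
Qed.

Lemma homog_infty n (h : {poly C}) : homog n h 1 0 = h`_n.
Proof.
rewrite /homog big_ord_recr /= subnn expr0 !mulr1 expr1n mulr1 big1 ?add0r //.
by move=> i _; rewrite expr0n subn_eq0 leqNgt ltn_ord mulr0.
Qed.

(* [h] is read as a binary form of degree [n]: infinity is a root iff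
   [deg h < n]. *)
Definition root_P1 (h : {poly C}) (n : nat) (x : P1) : bool :=
  if x is Some a then root h a else (size h <= n)%N.

Lemma homog_eq0 n (h : {poly C}) (x : P1) : (size h <= n.+1)%N ->
  (let: (x0, x1) := hcoords x in homog n h x0 x1 == 0) = root_P1 h n x.
Proof.
move=> hs; case: x => [a|] /=; first by rewrite homog_horner.
by rewrite homog_infty leq_size_coef.
Qed.

Lemma root_P1_finite (h : {poly C}) n : h != 0 -> finite_set (root_P1 h n).
Proof.
move=> hnz; have [r hr] := closed_field_poly_normal h.
exists (None :: map Some r) => -[a|] //= ra.
rewrite inE /= mem_map; last by move=> ? ? [].
by move: ra; rewrite hr rootZ ?lead_coef_eq0 // root_prod_XsubC.
Qed.

Lemma root_P1_exists (h : {poly C}) n : (size h <= n.+1)%N -> (0 < n)%N ->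
  exists x, root_P1 h n x.
Proof.
move=> hs n_gt0; case: (leqP (size h) n) => hn; first by exists None.
have /closed_rootP [a ha] : size h != 1%N.
  by rewrite neq_ltn (leq_ltn_trans n_gt0 hn) orbT.
by exists (Some a).
Qed.

Lemma three_roots_P1 (h : {poly C}) n : (2 < n)%N -> h != 0 ->
  (size h <= n.+1)%N -> (forall a, ~~ (('X - a%:P) ^+ 2 %| h)) ->
  ~~ (size h <= n.-1)%N ->
  exists u1 u2 u3 : P1, [/\ root_P1 h n u1, root_P1 h n u2, root_P1 h n u3 &
    [/\ u1 != u2, u1 != u3 & u2 != u3]].
Proof.
move=> n_gt2 hnz hs simple infty.
have [r hr] := closed_field_poly_normal h.
have cnz : lead_coef h != 0 by rewrite lead_coef_eq0.
have ur : uniq r.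
  apply/negPn/negP => /XsubC_sqr_dvd_prod [a].
  by rewrite -(dvdpZr _ _ cnz) -hr; apply/negP.
have sr : size h = (size r).+1 by rewrite {1}hr size_scale // size_prod_XsubC.
have rr z : z \in r -> root_P1 h n (Some z).
  by move=> zr; rewrite /= hr rootZ // root_prod_XsubC.
case: (ltnP n (size h)) => hn.
  have : (2 < size r)%N by rewrite -ltnS -sr (leq_ltn_trans n_gt2 hn).
  case: r ur rr {hr sr} => [|z1 [|z2 [|z3 r]]] //=.
  rewrite !inE !negb_or => /and4P [/and3P [n12 n13 _] /andP [n23 _] _ _] rr _.
  exists (Some z1), (Some z2), (Some z3).
  by split=> //=; apply: rr; rewrite !inE eqxx ?orbT.
have : (1 < size r)%N.
  rewrite -ltnS -sr; move: infty; rewrite -ltnNge; apply: leq_ltn_trans.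
  by case: (n) n_gt2.
case: r ur rr {hr sr} => [|z1 [|z2 r]] //=.
rewrite !inE !negb_or => /andP [/andP [n12 _] _] rr _.
exists (Some z1), (Some z2), None.
by split=> //=; apply: rr; rewrite !inE eqxx ?orbT.
Qed.

(* The dehomogenized [n]-th power of the linear form vanishing at [u]. *)
Definition pow_P1 (n : nat) (u : P1) : {poly C} :=
  if u is Some a then ('X - a%:P) ^+ n else 1.

Lemma pow_P1_indep n (u1 u2 u3 : P1) (e1 e2 e3 : C) : (1 < n)%N ->
  u1 != u2 -> u1 != u3 -> u2 != u3 ->
  e1 *: pow_P1 n u1 + e2 *: pow_P1 n u2 + e3 *: pow_P1 n u3 = 0 -> e1 = 0.
Proof.
move=> n_gt1; case: u1 => [a1|]; case: u2 => [a2|]; case: u3 => [a3|] //=.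
- by move=> n12 n13 _; apply: XsubC_exp3_indep.
- by move=> n12 _ _; rewrite alg_polyC => /(XsubC_exp2_indep n_gt1 n12) [].
- move=> _ n13 _; rewrite addrAC alg_polyC.
  by move/(XsubC_exp2_indep n_gt1 n13) => [].
- move=> _ _ n23; rewrite -addrA addrC alg_polyC.
  by move/(XsubC_exp2_indep n_gt1 n23) => [].
Qed.

Section RationalMap.
Variables (d : nat) (p q : {poly C}).
Hypotheses (d_gt1 : (1 < d)%N) (pq_rat : is_ratfun p q d).
Local Notation f := (ratapp p q d).

Lemma size_num : (size p <= d.+1)%N.
Proof. by case: pq_rat => _ <-; rewrite leq_maxl. Qed.

Lemma size_den : (size q <= d.+1)%N.
Proof. by case: pq_rat => _ <-; rewrite leq_maxr. Qed.

Lemma coprime_num_den : coprimep p q.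
Proof. by case: pq_rat. Qed.

Lemma num_den_not_small : ~~ ((size p <= d) && (size q <= d))%N.
Proof. by case: pq_rat => _ e; rewrite -geq_max e ltnn. Qed.

Definition fiber_poly (w : P1) : {poly C} :=
  if w is Some b then p - b%:P * q else q.

Lemma size_fiber_poly w : (size (fiber_poly w) <= d.+1)%N.
Proof.
case: w => [b|] /=; last exact: size_den.
apply: leq_trans (size_polyD _ _) _; rewrite size_polyN geq_max size_num /=.
by rewrite mul_polyC; apply: leq_trans (size_scale_leq _ _) size_den.
Qed.

Lemma ratapp_eq x w : (f x == w) = root_P1 (fiber_poly w) d x.
Proof.
rewrite /ratapp; case: x => [a|] /=.
  rewrite !homog_horner ?size_num ?size_den //.
  case: w => [b|]; case: ifP => qa; rewrite /= /root ?hornerE ?qa //.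
    move/eqP: qa => qa; rewrite qa mulr0 subr0; apply/esym/negP => pa.
    by have := coprimep_root coprime_num_den pa; rewrite qa eqxx.
  rewrite subr_eq0; apply/eqP/eqP => [[<-]|->]; first by rewrite divfK ?qa.
  by rewrite mulfK ?qa.
rewrite !homog_infty; case: w => [b|] /=; last first.
  by case: ifP => qd; rewrite leq_size_coef ?size_den // qd.
rewrite (leq_size_coef (size_fiber_poly (Some b))) coefB coefCM.
case: ifP => qd.
  move: num_den_not_small; rewrite (leq_size_coef size_num) (leq_size_coef size_den).
  by move/eqP: qd => ->; rewrite eqxx andbT mulr0 subr0 => /negbTE ->.
rewrite subr_eq0; apply/eqP/eqP => [[<-]|->]; first by rewrite divfK ?qd.
by rewrite mulfK ?qd.
Qed.

Lemma fiber_poly_neq0 w : fiber_poly w != 0.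
Proof.
have pq_small : (size p <= 1)%N -> (size q <= 1)%N -> False.
  move=> sp sq; move: num_den_not_small.
  by rewrite (leq_trans sp (ltnW d_gt1)) (leq_trans sq (ltnW d_gt1)).
case: w => [b|] /=; apply/eqP => fw.
  move/eqP: fw; rewrite subr_eq0 => /eqP fw.
  move: coprime_num_den; rewrite fw coprimepMl coprimepp => /andP [_ /eqP sq].
  apply: pq_small; last by rewrite sq.
  by rewrite fw; apply: leq_trans (size_polyMleq _ _) _; rewrite sq size_polyC addn1 leq_b1.
move: coprime_num_den; rewrite fw coprimep0 => /eqp_size; rewrite size_poly1 => sp.
by apply: pq_small; rewrite ?sp // fw size_poly0.
Qed.

Lemma ratapp_fiber_finite w : finite_set (fun x => f x = w).
Proof.
have [s Hs] := root_P1_finite d (fiber_poly_neq0 w).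
by exists s => x /eqP; rewrite ratapp_eq => /Hs.
Qed.

Lemma ratapp_surj w : exists x, f x = w.
Proof.
have [x hx] := root_P1_exists (size_fiber_poly w) (ltnW d_gt1).
by exists x; apply/eqP; rewrite ratapp_eq.
Qed.

Lemma fiber_poly_totally_ramified w u : (forall x, f x = w -> x = u) ->
  exists2 c : C, c != 0 & fiber_poly w = c *: pow_P1 d u.
Proof.
move=> fu; have [r hr] := closed_field_poly_normal (fiber_poly w).
have cnz : lead_coef (fiber_poly w) != 0 by rewrite lead_coef_eq0 fiber_poly_neq0.
exists (lead_coef (fiber_poly w)) => //.
have root_fu z : z \in r -> Some z = u.
  move=> zr; apply: fu; apply/eqP; rewrite ratapp_eq /= hr rootZ //.
  by rewrite root_prod_XsubC.
case: u fu root_fu => [a|] fu root_fu /=.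
  have /all_pred1P ra : all (pred1 a) r.
    by apply/allP => z /root_fu [->] /=.
  have : size (fiber_poly w) = d.+1.
    apply/eqP; rewrite eqn_leq size_fiber_poly ltnNge /=; apply/negP => sw.
    by have /fu : f None = w by apply/eqP; rewrite ratapp_eq.
  rewrite {1}hr size_scale // size_prod_XsubC => -[szr].
  by rewrite {1}hr ra szr big_nseq iter_mulr_1.
case: r hr root_fu => [|z r] hr root_fu; first by rewrite {1}hr big_nil.
by have := root_fu z (mem_head z r).
Qed.

Lemma fiber_poly_dependent (w1 w2 w3 : P1) : w1 != w2 -> w1 != w3 -> w2 != w3 ->
  exists k1 k2 k3 : C, [/\ k1 != 0, k2 != 0, k3 != 0 &
    k1 *: fiber_poly w1 + k2 *: fiber_poly w2 + k3 *: fiber_poly w3 = 0].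
Proof.
case: w1 => [b1|]; case: w2 => [b2|]; case: w3 => [b3|] //= n12 n13 n23.
- exists (b2 - b3), (b3 - b1), (b1 - b2).
  rewrite !subr_eq0 n23 [b3 == b1]eq_sym n13 n12; split=> //.
  by apply/polyP => i; rewrite !(coefD, coefZ, coefN, coefCM, coef0); ring.
- exists 1, (-1), (b1 - b2); rewrite oner_eq0 oppr_eq0 oner_eq0 subr_eq0 n12.
  by split=> //; apply/polyP => i; rewrite !(coefD, coefZ, coefN, coefCM, coef0); ring.
- exists 1, (b1 - b3), (-1); rewrite oner_eq0 oppr_eq0 oner_eq0 subr_eq0 n13.
  by split=> //; apply/polyP => i; rewrite !(coefD, coefZ, coefN, coefCM, coef0); ring.
- exists (b2 - b3), 1, (-1); rewrite oner_eq0 oppr_eq0 oner_eq0 subr_eq0 n23.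
  by split=> //; apply/polyP => i; rewrite !(coefD, coefZ, coefN, coefCM, coef0); ring.
Qed.

(* The fibers of [f] span a pencil, so three of them are dependent, whereas
   three [d]-th powers of distinct linear forms are not. *)
Lemma totally_ramified3_false (w1 w2 w3 u1 u2 u3 : P1) :
  w1 != w2 -> w1 != w3 -> w2 != w3 ->
  (forall x, f x = w1 -> x = u1) -> (forall x, f x = w2 -> x = u2) ->
  (forall x, f x = w3 -> x = u3) -> False.
Proof.
move=> n12 n13 n23 fu1 fu2 fu3.
have f_u (w u : P1) : (forall x, f x = w -> x = u) -> f u = w.
  by move=> fu; have [x fx] := ratapp_surj w; rewrite -(fu x fx).
have m12 : u1 != u2 by apply: contraNneq n12 => e; rewrite -(f_u _ _ fu1) -(f_u _ _ fu2) e.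
have m13 : u1 != u3 by apply: contraNneq n13 => e; rewrite -(f_u _ _ fu1) -(f_u _ _ fu3) e.
have m23 : u2 != u3 by apply: contraNneq n23 => e; rewrite -(f_u _ _ fu2) -(f_u _ _ fu3) e.
have [k1 [k2 [k3 [k1nz _ _ dep]]]] := fiber_poly_dependent n12 n13 n23.
have [c1 c1nz e1] := fiber_poly_totally_ramified fu1.
have [c2 _ e2] := fiber_poly_totally_ramified fu2.
have [c3 _ e3] := fiber_poly_totally_ramified fu3.
move: dep; rewrite e1 e2 e3 !scalerA => /(pow_P1_indep d_gt1 m12 m13 m23) /eqP.
by rewrite mulf_eq0 (negbTE k1nz) (negbTE c1nz).
Qed.

Definition fix_poly : {poly C} := p - 'X * q.

Lemma size_fix_poly : (size fix_poly <= d.+2)%N.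
Proof.
apply: leq_trans (size_polyD _ _) _; rewrite size_polyN geq_max.
rewrite (leq_trans size_num) //=; apply: leq_trans (size_polyMleq _ _) _.
by rewrite size_polyX addSn add1n ltnS size_den.
Qed.

Lemma ratapp_fixE x : (f x == x) = root_P1 fix_poly d.+1 x.
Proof.
rewrite ratapp_eq; case: x => [a|] /=; first by rewrite /root /fix_poly !hornerE.
rewrite (leq_size_coef size_den) (leq_size_coef size_fix_poly) /fix_poly.
by rewrite coefB coefXM /= (nth_default 0 (leq_trans size_num _)) ?sub0r ?oppr_eq0.
Qed.

Lemma fix_poly_neq0 : fix_poly != 0.
Proof.
rewrite /fix_poly subr_eq0; apply/eqP => pE; move: coprime_num_den.
rewrite pE coprimepMl coprimepp => /andP [_ /eqP sq].
case: pq_rat => _; rewrite pE mulrC size_mulX -?size_poly_eq0 ?sq // => -[d1].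
by move: d_gt1; rewrite -d1.
Qed.

Lemma totally_ramified_fixpoint_simple a :
  (forall x, f x = Some a -> x = Some a) -> ~~ (('X - a%:P) ^+ 2 %| fix_poly).
Proof.
move=> fa; apply/negP => dv.
have [c cnz fibE] := fiber_poly_totally_ramified fa.
have : ('X - a%:P) ^+ 2 %| ('X - a%:P) * q.
  have -> : ('X - a%:P) * q = fiber_poly (Some a) - fix_poly.
    by rewrite /fix_poly /=; ring.
  by rewrite dvdp_sub // fibE dvdpZr // dvdp_exp2l.
rewrite expr2 dvdp_mul2l ?polyXsubC_eq0 // dvdp_XsubCl => qa.
have /(coprimep_root coprime_num_den) : root p a.
  move: (congr1 (horner^~ a) fibE); rewrite /= !hornerE subrr expr0n.
  by rewrite (gtn_eqF (ltnW d_gt1)) mulr0 (eqP qa) mulr0 subr0 => /eqP.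
by rewrite (eqP qa) eqxx.
Qed.

Lemma totally_ramified_fixpoint_infty :
  (forall x, f x = None -> x = None) -> ~~ (size fix_poly <= d)%N.
Proof.
move=> fN; have [c cnz /= qE] := fiber_poly_totally_ramified fN.
have : ~~ (size p <= d)%N.
  move: num_den_not_small; rewrite qE size_scale // size_poly1.
  by rewrite (ltnW d_gt1) andbT.
rewrite (leq_size_coef size_num); apply: contra => /(nth_default 0).
rewrite /fix_poly coefB coefXM qE coefZ coef1 (gtn_eqF (ltnW d_gt1)).
by rewrite gtn_eqF ?ltn_predRL // mulr0 subr0 => ->.
Qed.

(* A totally ramified fixed point is a simple root of [fix_poly], so there
   would be [d + 1 >= 3] of them. *)
Lemma exists_fixpoint_other_preimage :
  exists u, f u = u /\ exists2 x, f x = u & x != u.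
Proof.
apply: NNPP => no_other.
have fixed_tr u : f u = u -> forall x, f x = u -> x = u.
  move=> fu x fx; apply: NNPP => xu; apply: no_other.
  by exists u; split=> //; exists x => //; apply/eqP.
have simple a : ~~ (('X - a%:P) ^+ 2 %| fix_poly).
  apply/negP => dv; have fa : f (Some a) = Some a.
    apply/eqP; rewrite ratapp_fixE /= -dvdp_XsubCl; apply: dvdp_trans dv.
    exact: (@dvdp_exp2l _ _ 1 2).
  by move: dv; apply/negP/totally_ramified_fixpoint_simple/fixed_tr.
have infty : ~~ (size fix_poly <= d.+1.-1)%N.
  apply/negP => sd; have fN : f None = None.
    by apply/eqP; rewrite ratapp_fixE /= (leq_trans sd).
  by move: sd; apply/negP/totally_ramified_fixpoint_infty/fixed_tr.
have [u1 [u2 [u3 [r1 r2 r3 [n12 n13 n23]]]]] :=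
  three_roots_P1 (n := d.+1) d_gt1 fix_poly_neq0 size_fix_poly simple infty.
have fixed (u : P1) : root_P1 fix_poly d.+1 u -> f u = u.
  by move=> ru; apply/eqP; rewrite ratapp_fixE.
apply: (totally_ramified3_false n12 n13 n23); apply: fixed_tr; exact: fixed.
Qed.

Lemma ratapp_preperiodic_infinite : ~ finite_set (preperiodic_pt f).
Proof.
move=> fin; have [u [fu [x fx xu]]] := exists_fixpoint_other_preimage.
have pre_onto y : preperiodic_pt f y -> exists2 x, preperiodic_pt f x & f x = y.
  move=> py; have [x' fx'] := ratapp_surj y.
  by exists x' => //; apply: preperiodic_pt_preimage; rewrite fx'.
have pu := preperiodic_pt_fixed fu.
have px : preperiodic_pt f x by apply: preperiodic_pt_preimage; rewrite fx.
by move/eqP: xu; apply; apply: (finite_set_surj_inj fin pre_onto px pu); rewrite fx fu.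
Qed.

End RationalMap.

Section SplitMap.
Variables (f g : P1 -> P1) (Cv : P1 * P1 -> Prop).
Hypothesis Cv_preper : preperiodic_set (split_map f g) Cv.
Hypothesis f_fiber : forall w, finite_set (fun x => f x = w).
Hypothesis Cv_fiber : forall x, finite_set (fun y => Cv (x, y)).
Hypothesis Cv_onto : forall x, exists y, Cv (x, y).

Local Notation Phi := (split_map f g).
Local Notation Y j := (img_iter Phi j Cv).

Lemma iter_split_map n x y : iter n Phi (x, y) = (iter n f x, iter n g y).
Proof. by elim: n => //= n ->. Qed.

Lemma img_iterP j z : Y j z <-> exists2 z0, Cv z0 & iter j Phi z0 = z.
Proof.
elim: j z => [|j IH] z; first by split=> [Cz | [z0 Cz0 <-]] //; exists z.
split=> [[z' [/IH [z0 Cz0 <-] <-]] | [z0 Cz0 <-]]; first by exists z0.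
by exists (iter j Phi z0); split=> //; apply/IH; exists z0.
Qed.

Lemma finite_set_iter_preimage j w : finite_set (fun x => iter j f x = w).
Proof.
elim: j w => [|j IH] w; first by exists [:: w] => x <-; apply: mem_head.
have [s Hs] := IH w.
apply: finite_set_sub (finite_set_bigcup (fun y (_ : y \in s) => f_fiber y)).
by move=> x; rewrite iterSr => e; exists (f x); first exact: Hs.
Qed.

Lemma finite_set_img_iter_fiber j x : finite_set (fun y => Y j (x, y)).
Proof.
have [s Hs] := finite_set_iter_preimage j x.
apply: finite_set_sub (finite_set_image (iter j g)
  (finite_set_bigcup (fun x0 (_ : x0 \in s) => Cv_fiber x0))).
move=> y /img_iterP [[x0 y0] Cz0]; rewrite iter_split_map => -[fx0 gy0].
by exists y0 => //; exists x0 => //; apply: Hs.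
Qed.

Lemma img_iter_finite : exists n, forall j, exists2 j', (j' < n)%N & Y j = Y j'.
Proof.
case: Cv_preper => m [n [mn Ymn]]; exists n; elim=> [|j [j' j'n Yj]].
  by exists 0%N => //; apply: leq_ltn_trans mn.
have YS : Y j.+1 = Y j'.+1 by rewrite /img_iter /= -/(img_iter Phi j Cv) Yj.
case: (ltnP j'.+1 n) => j'n'; first by exists j'.+1.
have j'n1 : j'.+1 = n by apply/eqP; rewrite eqn_leq j'n j'n'.
by exists m; rewrite // YS j'n1.
Qed.

Lemma preperiodic_pt_split x y :
  preperiodic_pt f x -> Cv (x, y) -> preperiodic_pt Phi (x, y).
Proof.
case=> sx Hsx Cxy; have [n Hn] := img_iter_finite.
pose jx := [seq (j, x') | j <- iota 0 n, x' <- sx].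
have [sy Hsy] : finite_set (fun y' => exists2 i, i \in jx & Y i.1 (i.2, y')).
  by apply: finite_set_bigcup => i _; apply: finite_set_img_iter_fiber.
exists [seq (x', y') | x' <- sx, y' <- sy] => k.
rewrite iter_split_map allpairs_f // Hsy //.
have [j jn Yk] := Hn k; exists (j, iter k f x); first by rewrite allpairs_f ?mem_iota.
by rewrite /= -Yk; apply/img_iterP; exists (x, y); rewrite ?iter_split_map.
Qed.

Lemma split_preperiodic_infinite : ~ finite_set (preperiodic_pt f) ->
  ~ finite_set (fun z => Cv z /\ preperiodic_pt Phi z).
Proof.
move=> f_inf [s Hs]; apply: f_inf; exists (map fst s) => x px.
have [y Cxy] := Cv_onto x.
exact: (map_f fst (Hs (x, y) (conj Cxy (preperiodic_pt_split px Cxy)))).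
Qed.

End SplitMap.

Section Curve.
Variable F : {poly {poly C}}.
Hypotheses (F_irr : irreducible2 F) (degx_gt0 : (0 < degx F)%N)
  (degy_gt0 : (0 < degy F)%N).

(* The equation of the vertical fiber of [curve F] over [x], as a form of
   degree [degy F] in [y]. *)
Definition curve_fiber_poly (x : P1) : {poly C} :=
  \poly_(j < (degy F).+1)
    (let: (x0, x1) := hcoords x in homog (degx F) (F`_j) x0 x1).

Lemma bihom_homog x0 x1 y0 y1 : bihom F x0 x1 y0 y1 =
  homog (degy F) (\poly_(j < (degy F).+1) homog (degx F) F`_j x0 x1) y0 y1.
Proof.
rewrite /bihom /homog; apply: eq_bigr => j _; rewrite coef_poly ltn_ord.
by rewrite !mulr_suml; apply: eq_bigr.
Qed.

Lemma curveE x y : curve F (x, y) <-> root_P1 (curve_fiber_poly x) (degy F) y.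
Proof.
rewrite -homog_eq0 ?size_poly // /curve /curve_fiber_poly.
by case: x => [a|]; case: y => [b|]; rewrite /= bihom_homog; split => /eqP.
Qed.

Lemma size_ycoef j : (size (F`_j)%R <= (degx F).+1)%N.
Proof.
case: (ltnP j (size F)) => hj; last by rewrite nth_default // size_poly0.
have := @leq_bigmax _ (fun i : 'I_(size F) => (size (ycoef F i)).-1) (Ordinal hj).
by rewrite /degx /ycoef /=; case: (size F`_j).
Qed.

(* An irreducible [F] of positive degree in both variables has no factor
   depending on [x] alone, so no vertical fiber is the whole line. *)
Lemma curve_fiber_poly_neq0 x : curve_fiber_poly x != 0.
Proof.
case: F_irr => _ [Fnz F_prime].
have sF : size F = (degy F).+1 by rewrite /degy prednK // lt0n size_poly_eq0.
apply/negP => /eqP G0.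
have coef0 j : (j < size F)%N ->
    (let: (x0, x1) := hcoords x in homog (degx F) (F`_j) x0 x1) = 0.
  by move=> hj; move/polyP: G0 => /(_ j); rewrite coef_poly -sF hj coef0.
case: x coef0 {G0} => [a|] /= coef0.
  have ra j : root F`_j a.
    case: (ltnP j (size F)) => hj; last by rewrite nth_default // root0.
    by move: (coef0 j hj); rewrite homog_horner ?size_ycoef // => /eqP.
  pose H := map_poly (fun g : {poly C} => g %/ ('X - a%:P)) F.
  have FE : F = ('X - a%:P)%:P * H.
    apply/polyP => j; rewrite coefCM coef_map_id0 ?div0p // mulrC divpK //.
    by rewrite dvdp_XsubCl.
  case: (F_prime _ _ FE).
    by rewrite poly_unitE size_polyC polyXsubC_eq0 /= coefC /= poly_unitE size_XsubC.
  rewrite poly_unitE => /andP [/eqP sH _].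
  have : (size F <= 1)%N.
    rewrite {1}FE; apply: leq_trans (size_polyMleq _ _) _.
    by rewrite sH size_polyC polyXsubC_eq0.
  by rewrite sF ltnS leqn0 => /eqP e; move: degy_gt0; rewrite e.
have cF : (0 < #|'I_(size F)|)%N by rewrite card_ord sF.
have [j0 dxE] := eq_bigmax (fun i : 'I_(size F) => (size (ycoef F i)).-1) cF.
have e0 : degx F = (size F`_j0).-1 by rewrite /degx dxE.
move: (coef0 j0 (ltn_ord j0)); rewrite homog_infty e0 -lead_coefE.
move/eqP; rewrite lead_coef_eq0 => /eqP Fj0.
by move: degx_gt0; rewrite e0 Fj0 size_poly0.
Qed.

Lemma curve_fiber_finite x : finite_set (fun y => curve F (x, y)).
Proof.
have [s Hs] := root_P1_finite (degy F) (curve_fiber_poly_neq0 x).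
by exists s => y /curveE /Hs.
Qed.

Lemma curve_fiber_exists x : exists y, curve F (x, y).
Proof.
have [y hy] := root_P1_exists (h := curve_fiber_poly x) (size_poly _ _) degy_gt0.
by exists y; apply/curveE.
Qed.

End Curve.

Theorem lemma6p1 (d : nat) (p q r s : {poly C}) (F : {poly {poly C}}) :
  (1 < d)%N ->
  is_ratfun p q d -> is_ratfun r s d ->
  irreducible2 F -> (0 < degx F)%N -> (0 < degy F)%N ->
  preperiodic_set (split_map (ratapp p q d) (ratapp r s d)) (curve F) ->
  infinite_set (fun z => curve F z /\
     preperiodic_pt (split_map (ratapp p q d) (ratapp r s d)) z).
Proof.
move=> d_gt1 pq_rat _ F_irr degx_gt0 degy_gt0 C_preper.
exact: (split_preperiodic_infinite C_preper (ratapp_fiber_finite d_gt1 pq_rat)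
  (curve_fiber_finite F_irr degx_gt0 degy_gt0) (curve_fiber_exists degy_gt0)
  (ratapp_preperiodic_infinite d_gt1 pq_rat)).
Qed.
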